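(* Let $T\ge 1$ and $n_w\ge 0$ be integers, let $C>0$, and let $q_1,\dots,q_T\in\mathbb{R}$. For $\mathbf{u}=(u_1,\dots,u_T)\in\mathbb{R}^T$ and $i=1,\dots,T$ write $\mathbf{u}_i=(u_{i-n_w},\dots,u_i)$, where entries with index $\le 0$ are fixed constants (not decision variables). Let $J_i:\mathbb{R}\to\mathbb{R}$ ($i=1,\dots,T$) be continuously differentiable and increasing, and let $f_i:\mathbb{R}^{n_w+1}\to\mathbb{R}$ ($i=1,\dots,T$) be continuously differentiable and non-decreasing in each of their arguments. Define the penalty function $$\hat J(\mathbf{u})=\sum_{i=1}^T\Big(J_i(u_i)+C\big(f_i(\mathbf{u}_i)-q_i\big)^2\Big),$$ and, for guardrail variables $\epsilon_1,\dots,\epsilon_T\ge 0$, the modified penalty function $$\hat J'(\mathbf{u})=\sum_{i=1}^T\Big(J_i(u_i)+C\big(f_i(\mathbf{u}_i)-q_i-\epsilon_i\big)^2\Big).$$ Let $\mathbf{u}^*$ be any (unconstrained, local) minimum of $\hat J$ on $\mathbb{R}^T$. Then the first step of gradient descent on $\hat J'$ started at $\mathbf{u}^*$ does not decrease any coordinate: for every step size $\alpha>0$ and every $j=1,\dots,T$, the $j$-th coordinate of $\mathbf{u}^*-\alpha\nabla\hat J'(\mathbf{u}^* )$ is at least $u^*_j$ (equivalently, $\nabla \hat J'(\mathbf{u}^* )\le \mathbf{0}$ componentwise).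
   Context: ''Increasing'' for a differentiable function means its derivative is strictly positive; ''non-decreasing'' means all its partial derivatives are non-negative. $\hat J'$ is obtained from $\hat J$ by replacing each right-hand side $q_i$ by $q_i+\epsilon_i$. *)

From HB Require Import structures.
From mathcomp Require Import all_boot all_order all_algebra.
From mathcomp Require Import all_classical all_reals all_analysis.
Set Implicit Arguments. Unset Strict Implicit. Unset Printing Implicit Defensive.
Import Order.TTheory GRing.Theory Num.Theory.
Import numFieldNormedType.Exports.
Local Open Scope ring_scope.

(* Entry m (0-based) of a row vector, or 0 if out of range (never used out of range). *)
Definition ventry (R : realType) (T : nat) (u : 'rV[R]_T) (m : nat) : R :=
  match @insub nat (fun k => k < T)%N 'I_T m with Some j => u 0 j | None => 0 end.

(* Paper index i (1-based) corresponds to the ordinal i-1.  For 0-based i, the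
   window u_i = (u_{i-n_w}, ..., u_i) (paper indices (i+1)-n_w, ..., i+1);
   its k-th entry (k = 0..n_w) has paper index (i+1) - n_w + k.  Entries with
   paper index <= 0 are the fixed constants c (indexed by their paper index). *)
Definition window (R : realType) (T nw : nat) (c : int -> R) (u : 'rV[R]_T)
    (i : 'I_T) : 'rV[R]_(nw.+1) :=
  \row_(k < nw.+1)
    (if (nw <= i + k)%N then ventry u (i + k - nw)%N
     else c ((i + k)%:Z + 1 - nw%:Z)).

Definition Jhat (R : realType) (T nw : nat) (c : int -> R) (J : 'I_T -> R -> R)
    (f : 'I_T -> 'rV[R]_(nw.+1) -> R) (C : R) (q : 'I_T -> R) (u : 'rV[R]_T) : R :=
  \sum_(i < T) (J i (u 0 i) + C * (f i (@window R T nw c u i) - q i) ^+ 2).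

Definition grad (R : realType) (T : nat) (F : 'rV[R]_T -> R) (u : 'rV[R]_T)
    : 'rV[R]_T :=
  \row_(j < T) ('D_(delta_mx 0 j) F u).

(* Up to a constant, Jhat' = Jhat - sum_i 2 C eps_i f_i(u_i), so the directional
   derivative of Jhat' at u* along the j-th basis vector e_j is that of Jhat,
   which vanishes at the local minimum (Fermat on the line u* + h e_j), minus
   sum_i 2 C eps_i times the derivative of f_i along the window of e_j.  That
   window is a nonnegative vector, so by monotonicity of f_i each of these
   derivatives is nonnegative: the gradient of Jhat' at u* is nonpositive. *)

From HB Require Import structures.
From mathcomp Require Import all_boot all_order all_algebra.
From mathcomp Require Import all_classical all_reals all_analysis.
From mathcomp Require Import ring lra.
Set Implicit Arguments. Unset Strict Implicit. Unset Printing Implicit Defensive.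
Import Order.TTheory GRing.Theory Num.Theory.
Import numFieldNormedType.Exports.
Local Open Scope ring_scope.
Local Open Scope classical_set_scope.

Section AffineDirection.
Variables (R : numFieldType) (U V W : normedModType R).
Variables (F : V -> W) (A : U -> V) (u v : U) (w : V).
Hypothesis A_line : forall h : R, A (h *: v + u) = h *: w + A u.

Let diffquot_comp_affine :
  (fun h : R => h^-1 *: ((F \o A \o shift u) (h *: v) - (F \o A) u)) =
  (fun h : R => h^-1 *: ((F \o shift (A u)) (h *: w) - F (A u))).
Proof. by apply/funext => h /=; rewrite A_line. Qed.

Lemma derivable_comp_affine : derivable F (A u) w -> derivable (F \o A) u v.
Proof. by rewrite /derivable diffquot_comp_affine. Qed.

Lemma derive_comp_affine : 'D_v (F \o A) u = 'D_w F (A u).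
Proof. by rewrite /derive diffquot_comp_affine. Qed.

End AffineDirection.

Lemma derive_local_min (R : realFieldType) (V : normedModType R)
    (F : V -> R) (x v : V) :
  (forall t : R, derivable F (t *: v + x) v) ->
  (\forall y \near x, F x <= F y) -> 'D_v F x = 0.
Proof.
move=> dF xmin; pose A (h : R) := h *: v + x.
have A_line (t h : R) : A (h *: 1 + t) = h *: v + A t.
  by rewrite /A [h *: 1]mulr1 scalerDl addrA.
have A0 : A 0 = x by rewrite /A scale0r add0r.
have A_cvg : A h @[h --> 0] --> x.
  rewrite -[x in _ --> x]A0; apply: cvgD; last exact: cvg_cst.
  by apply: cvgZr_tmp; exact: cvg_id.
have /nbhs_ballP[r /= r0 Amin] : \forall h \near 0, F (A 0) <= F (A h).
  by rewrite A0; exact: A_cvg _ xmin.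
have : is_derive (0 : R) (1 : R) (F \o A) 0.
  apply: (@derive1_at_min _ _ (- r) r).
  - by rewrite ge0_cp // ltW.
  - by move=> t _; apply: derivable_comp_affine (A_line t) (dF t).
  - by rewrite in_itv /= oppr_lt0 r0.
  - move=> t; rewrite in_itv /= => /andP[rt tr]; apply: Amin.
    by rewrite /ball /= sub0r normrN ltr_norml rt tr.
by case=> _; rewrite (derive_comp_affine F (A_line 0)) A0.
Qed.

Lemma derive_ge0 (R : realFieldType) n (F : 'rV[R]_n -> R) (x w : 'rV[R]_n) :
  differentiable F x -> (forall k, 0 <= 'D_(delta_mx 0 k) F x) ->
  (forall k, 0 <= w 0 k) -> 0 <= 'D_w F x.
Proof.
move=> dF F'_ge0 w_ge0; rewrite deriveE // (row_sum_delta w) linear_sum.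
by apply: sumr_ge0 => k _; rewrite linearZ -deriveE //; exact: mulr_ge0.
Qed.

Section Window.
Variables (R : realType) (T nw : nat).

Lemma ventryD (h : R) (v u : 'rV[R]_T) m :
  ventry (h *: v + u) m = h * ventry v m + ventry u m.
Proof.
by rewrite /ventry; case: insubP => [k _ _|_]; rewrite ?mxE ?mulr0 ?addr0.
Qed.

Lemma ventry_ge0 (v : 'rV[R]_T) m : (forall j, 0 <= v 0 j) -> 0 <= ventry v m.
Proof. by move=> v_ge0; rewrite /ventry; case: insubP. Qed.

Lemma windowD (c : int -> R) (h : R) (v u : 'rV[R]_T) i :
  window nw c (h *: v + u) i = h *: window nw (fun=> 0) v i + window nw c u i.
Proof.
apply/rowP => k; rewrite !mxE; case: ifP => _; first by rewrite ventryD.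
by rewrite mulr0 add0r.
Qed.

Lemma window0_ge0 (v : 'rV[R]_T) i k :
  (forall j, 0 <= v 0 j) -> 0 <= window nw (fun=> 0) v i 0 k.
Proof. by move=> v_ge0; rewrite mxE; case: ifP => // _; exact: ventry_ge0. Qed.

End Window.

Section PenaltyDerivative.
Variables (R : realType) (T nw : nat) (c : int -> R) (J : 'I_T -> R -> R).
Variables (f : 'I_T -> 'rV[R]_nw.+1 -> R) (C : R).
Hypothesis J_derivable : forall i x, derivable (J i) x 1.
Hypothesis f_differentiable : forall i x, differentiable (f i) x.

Lemma derivable_window_comp i (u v : 'rV[R]_T) :
  derivable (fun x => f i (window nw c x i)) u v.
Proof.
apply: (derivable_comp_affine (F := f i) (fun h => windowD nw c h v u i)).
exact: diff_derivable.
Qed.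

Lemma derive_window_comp i (u v : 'rV[R]_T) :
  'D_v (fun x => f i (window nw c x i)) u =
  'D_(window nw (fun=> 0) v i) (f i) (window nw c u i).
Proof. exact: (derive_comp_affine (f i) (fun h => windowD nw c h v u i)). Qed.

Lemma derivable_coord_comp i (u v : 'rV[R]_T) :
  derivable (fun x : 'rV[R]_T => J i (x 0 i)) u v.
Proof.
have coord_line (h : R) : (h *: v + u) 0 i = h *: v 0 i + u 0 i by rewrite !mxE.
apply: (derivable_comp_affine coord_line).
by apply: diff_derivable; apply/derivable1_diffP.
Qed.

Lemma derivable_Jhat Q (u v : 'rV[R]_T) : derivable (Jhat c J f C Q) u v.
Proof.
have -> : Jhat c J f C Q = \sum_(i < T) ((fun x : 'rV[R]_T => J i (x 0 i))
    + cst C * ((fun x => f i (window nw c x i)) - cst (Q i)) ^+ 2).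
  by rewrite fct_sumE.
apply: derivable_sum => i; apply: derivableD; first exact: derivable_coord_comp.
apply: derivableM; first exact: derivable_cst.
apply/derivableX/derivableB; last exact: derivable_cst.
exact: derivable_window_comp.
Qed.

Lemma Jhat_shift Q eps (u : 'rV[R]_T) :
  Jhat c J f C (fun i => Q i + eps i) u =
  Jhat c J f C Q u - \sum_(i < T) 2 * C * eps i * f i (window nw c u i)
  + \sum_(i < T) C * (2 * eps i * Q i + eps i ^+ 2).
Proof. by rewrite /Jhat -sumrB -big_split; apply: eq_bigr => i _ /=; ring. Qed.

Lemma derive_Jhat_shift Q eps (u v : 'rV[R]_T) :
  'D_v (Jhat c J f C (fun i => Q i + eps i)) u =
  'D_v (Jhat c J f C Q) u - \sum_(i < T)
     2 * C * eps i * 'D_(window nw (fun=> 0) v i) (f i) (window nw c u i).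
Proof.
pose g i x := 2 * C * eps i * f i (window nw c x i).
have g_derivable i : derivable (g i) u v.
  by apply: derivableM; [exact: derivable_cst | exact: derivable_window_comp].
have -> : Jhat c J f C (fun i => Q i + eps i) =
    Jhat c J f C Q - \sum_(i < T) g i
    + cst (\sum_(i < T) C * (2 * eps i * Q i + eps i ^+ 2)).
  by apply/funext => x; rewrite Jhat_shift fct_sumE.
rewrite deriveD; last 2 first.
- by apply: derivableB; [exact: derivable_Jhat | exact: derivable_sum].
- exact: derivable_cst.
rewrite derive_cst addr0 deriveB; last 2 first.
- exact: derivable_Jhat.
- exact: derivable_sum.
rewrite derive_sum //; congr (_ - _); apply: eq_bigr => i _.
by rewrite deriveMl ?derive_window_comp //; exact: derivable_window_comp.
Qed.

End PenaltyDerivative.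

Theorem proposition3 (R : realType) (T nw : nat) (C : R) (c : int -> R)
    (q eps : 'I_T -> R) (J : 'I_T -> R -> R) (f : 'I_T -> 'rV[R]_(nw.+1) -> R)
    (ustar : 'rV[R]_T) :
  (1 <= T)%N -> 0 < C ->
  (forall i x, derivable (J i) x 1) ->
  (forall i, continuous (derive1 (J i))) ->
  (forall i x, 0 < (derive1 (J i)) x) ->
  (forall i x, differentiable (f i) x) ->
  (forall i k, continuous (fun x => 'D_(delta_mx 0 k) (f i) x)) ->
  (forall i k x, 0 <= 'D_(delta_mx 0 k) (f i) x) ->
  (forall i, 0 <= eps i) ->
  (\forall v \near ustar, Jhat c J f C q ustar <= Jhat c J f C q v) ->
  forall (alpha : R), 0 < alpha -> forall j : 'I_T,
    ustar 0 j <=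
      (ustar - alpha *: grad (Jhat c J f C (fun i => q i + eps i)) ustar) 0 j.
Proof.
move=> _ C_gt0 J_derivable _ _ f_differentiable _ f'_ge0 eps_ge0 ustar_min.
move=> alpha alpha_gt0 j.
set e : 'rV[R]_T := delta_mx 0 j.
have stationary : 'D_e (Jhat c J f C q) ustar = 0.
  by apply: derive_local_min ustar_min => t; exact: derivable_Jhat.
have descent : 'D_e (Jhat c J f C (fun i => q i + eps i)) ustar <= 0.
  rewrite derive_Jhat_shift // stationary sub0r oppr_le0.
  apply: sumr_ge0 => i _; apply: mulr_ge0.
    by rewrite !mulr_ge0 // ltW.
  by apply: derive_ge0 => // k; apply: window0_ge0 => l; rewrite mxE ler0n.
rewrite !mxE -/e.
have := mulr_ge0_le0 (ltW alpha_gt0) descent; lra.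
Qed.
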